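(* Let $T$ be a balanced eulerian tree and let $T'$ be its balanced conjugate (the eulerian tree obtained from $T$ by re-rooting it at the other free leaf). Then the closure $\sigma(T')$ is the map obtained from the closure $\sigma(T)$ by reversing the orientation of its root edge.
   Context: A plane tree is a planar map (embedding of a finite connected graph in the sphere up to orientation-preserving homeomorphism) with one face; vertices of degree 1 are leaves, others inner vertices. An eulerian tree is a plane tree rooted at a leaf, whose leaves are coloured black or white, such that every inner vertex has even degree, every inner vertex of degree $2i$ is adjacent to exactly $i-1$ white leaves, and the root leaf is black; such a tree has exactly two more black leaves than white leaves. Two eulerian trees are conjugate if one is obtained from the other by changing which black leaf is the root. The word $\omega(T)$ of an eulerian tree $T$ is the word over $\{b,w\}$ obtained by following the border of the tree counterclockwise, ending at the root leaf, writing $b$ for each black leaf and $w$ for each white leaf. Reading $w$ as an opening and $b$ as a closing bracket, a word is correct if in every prefix the number of $w$'s is at least the number of $b$'s; in a correct word each $w$ is matched with a $b$, which induces a matching between leaves. In each conjugacy class there are exactly two rooted trees with $\omega(T)=p_1bp_2b$ where $p_1,p_2$ are correct bracketing words; the corresponding two root leaves are called the free leaves, and a tree is balanced if it is rooted at a free leaf. The closure $\sigma(T)$ of a balanced eulerian tree $T$ is obtained by: (1) going counterclockwise around the tree, merging each white leaf with the black leaf it is matched to in the bracketing word (forming an edge); (2) merging the two free leaves into an edge, and rooting the resulting map on this edge oriented from (the side of) the root leaf. *)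

From mathcomp Require Import all_boot fingroup perm.
Set Implicit Arguments. Unset Strict Implicit. Unset Printing Implicit Defensive.

(* A rooted leaf-coloured plane tree on the dart set D:
   tsg = rotation of darts around their vertex (counterclockwise),
   tal = fixed-point-free involution pairing the two darts of an edge,
   twhite d = true iff the leaf whose unique dart is d is white,
   troot = the dart of the root leaf. *)
Record etree (D : finType) := ETree {
  tsg : {perm D}; tal : {perm D}; twhite : D -> bool; troot : D }.

Section Trees.
Variable D : finType.
Implicit Type T : etree D.

Definition tphi T : D -> D := fun d => tsg T (tal T d).

Definition leafd T (d : D) : bool := tsg T d == d.

Definition vdeg T (d : D) : nat := fingraph.order (tsg T) d.

Definition is_plane_tree T : Prop :=
  [/\ forall d, tal T (tal T d) = d,
      forall d, tal T d != d,
      forall d e, fconnect (tphi T) d e                 (* one face (hence connected) *)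
    & fcard (tsg T) (@predT D) + 1 = #|D| %/ 2 + 2 ]. (* V - E + F = 2 with F = 1 *)

Definition is_eulerian_tree T : Prop :=
  [/\ is_plane_tree T,
      leafd T (troot T),
      ~~ twhite T (troot T)
    & forall d, ~~ leafd T d ->
        ~~ odd (vdeg T d) /\
        #|[pred e | fconnect (tsg T) d e && leafd T (tal T e) && twhite T (tal T e)]|
          = (vdeg T d)./2 - 1 ].

(* leaves met along the border, starting just after the root, ending at the root *)
Definition leafseq T : seq D :=
  filter (leafd T) (traject (tphi T) (tphi T (troot T)) #|D|).

(* the word omega(T): true = w, false = b *)
Definition word T : seq bool := map (twhite T) (leafseq T).

Definition reroot T (r : D) : etree D := ETree (tsg T) (tal T) (twhite T) r.

End Trees.

(* correct bracketing words: w opens, b closes *)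
Definition correct (w : seq bool) : Prop :=
  forall k, count negb (take k w) <= count id (take k w).

Definition balanced (D : finType) (T : etree D) : Prop :=
  exists p1 p2, [/\ correct p1, correct p2 & word T = p1 ++ false :: p2 ++ [:: false]].

(* bracket matching of a word by the usual stack algorithm: list of pairs
   (position of w, position of the b matched to it) *)
Fixpoint mtch (s : seq bool) (i : nat) (stk : seq nat) : seq (nat * nat) :=
  match s with
  | [::] => [::]
  | c :: s' =>
      if c then mtch s' i.+1 (i :: stk)
      else match stk with
           | [::] => mtch s' i.+1 [::]
           | j :: stk' => (j, i) :: mtch s' i.+1 stk'
           end
  end.

Definition matching (w : seq bool) := mtch w 0 [::].

Definition matched_in (M : seq (nat * nat)) (i : nat) : bool :=
  has (fun p => (p.1 == i) || (p.2 == i)) M.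

(* position of the leaf merged with the leaf at position i: its matched leaf,
   or, for an unmatched (free) leaf, the other unmatched leaf *)
Definition mate_idx (w : seq bool) (i : nat) : nat :=
  let M := matching w in
  match [seq p.2 | p <- M & p.1 == i] ++ [seq p.1 | p <- M & p.2 == i] with
  | j :: _ => j
  | [::] => head i [seq k <- iota 0 (size w) | (k != i) && ~~ matched_in M k]
  end.

(* a rooted map given on a sub-dart-set of D *)
Record pmap (D : finType) := PMap {
  pdarts : {set D}; ps : D -> D; pa : D -> D; proot : D }.

(* the closure sigma(T): leaf darts are removed, each inner dart pointing to a
   leaf is glued to the inner dart pointing to the leaf it is merged with;
   root = inner dart adjacent to the root leaf (edge oriented from its side) *)
Definition sclosure (D : finType) (T : etree D) : pmap D :=
  let L := leafseq T in
  let w := word T in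
  PMap [set d | ~~ leafd T d] (tsg T)
       (fun d => let l := tal T d in
                 if leafd T l then tal T (nth l L (mate_idx w (index l L)))
                 else tal T d)
       (tal T (troot T)).

Definition reverse_root (D : finType) (M : pmap D) : pmap D :=
  PMap (pdarts M) (ps M) (pa M) (pa M (proot M)).

Definition rmap_iso (D : finType) (M1 M2 : pmap D) : Prop :=
  exists f : D -> D,
    [/\ {in pdarts M1 &, injective f},
        f @: pdarts M1 = pdarts M2,
        {in pdarts M1, forall d, f (ps M1 d) = ps M2 (f d)},
        {in pdarts M1, forall d, f (pa M1 d) = pa M2 (f d)}
      & f (proot M1) = proot M2].

From mathcomp Require Import all_boot fingroup perm.
From mathcomp Require Import zify.
Set Implicit Arguments. Unset Strict Implicit. Unset Printing Implicit Defensive.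

(* Write the word of T as p1 b p2 b with p1, p2 correct.  The eulerian degree
   conditions give two more b's than w's, so p1 and p2 are Dyck words; the
   bracket matching of p1 b p2 b then matches p1 and p2 internally and the two
   free b's with each other.  Rerooting rotates the word, and since no proper
   prefix of such a word has two excess b's, the only rotation producing again a
   word of this shape is p2 b p1 b.  This swap preserves the matching, so both
   closures glue the same darts under the same rotation; only the root moves,
   from the dart at the old root leaf to the dart at its mate, the new root. *)

Fixpoint mtch_stack (s : seq bool) (i : nat) (stk : seq nat) : seq nat :=
  match s with
  | [::] => stk
  | c :: s' =>
      if c then mtch_stack s' i.+1 (i :: stk)
      else if stk is _ :: stk' then mtch_stack s' i.+1 stk' else mtch_stack s' i.+1 [::]
  end.

Lemma mtch_cat u s i stk :
  mtch (u ++ s) i stk = mtch u i stk ++ mtch s (i + size u) (mtch_stack u i stk).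
Proof.
elim: u i stk => [|[] u IH] i stk /=; first by rewrite addn0.
  by rewrite IH addSnnS.
by case: stk => [|j stk] /=; rewrite IH addSnnS.
Qed.

Fixpoint no_underflow (u : seq bool) (n : nat) : bool :=
  match u with
  | [::] => true
  | true :: u' => no_underflow u' n.+1
  | false :: u' => (0 < n) && no_underflow u' n.-1
  end.

Lemma no_underflowP u n :
  no_underflow u n <-> forall k, count negb (take k u) <= count id (take k u) + n.
Proof.
elim: u n => [|[] u IH] n /=; first by split=> // _ [|k].
  rewrite IH; split=> H.
    by case=> [|k] /=; [lia | have := H k; lia].
  by move=> k; have := H k.+1; rewrite /=; lia.
case: n => [|n] /=.
  by split=> // /(_ 1) /=; rewrite take0.
rewrite IH; split=> H.
  by case=> [|k] /=; [lia | have := H k; lia].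
by move=> k; have := H k.+1; rewrite /=; lia.
Qed.

Lemma size_mtch_stack u i stk : no_underflow u (size stk) ->
  size (mtch_stack u i stk) + count negb u = size stk + count id u.
Proof.
elim: u i stk => [|[] u IH] i stk /=; first by rewrite !addn0.
  by move=> /(IH i.+1 (i :: stk)) /=; lia.
by case: stk => [|j stk] //= /(IH i.+1 stk); lia.
Qed.

Definition shift_pairs (j : nat) (M : seq (nat * nat)) :=
  [seq (p.1 + j, p.2 + j) | p <- M].

Lemma mtch_shift u i stk j :
  mtch u (i + j) [seq x + j | x <- stk] = shift_pairs j (mtch u i stk).
Proof.
elim: u i stk => [|[] u IH] i stk //=; first by rewrite -addSn (IH i.+1 (i :: stk)).
by case: stk => [|x stk] /=; rewrite -addSn ?(IH i.+1 [::]) ?(IH i.+1 stk).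
Qed.

Lemma mtch_bound u i stk p : all (fun j => j < i) stk ->
  p \in mtch u i stk -> (p.1 < i + size u) && (p.2 < i + size u).
Proof.
elim: u i stk => [|[] u IH] i stk //=; rewrite -addSnnS.
  move=> stk_i /IH; apply; rewrite /= ltnSn /=.
  by apply: sub_all stk_i => x /ltnW.
case: stk => [_ /IH|x stk /andP[x_i stk_i]]; first exact.
rewrite inE => /predU1P [-> /=|/IH]; first lia.
by apply; apply: sub_all stk_i => y /ltnW.
Qed.

Lemma mtch_matched u i stk k : no_underflow u (size stk) ->
  (i <= k < i + size u) || (k \in stk) ->
  matched_in (mtch u i stk) k || (k \in mtch_stack u i stk).
Proof.
elim: u i stk => [|[] u IH] i stk /=.
- by rewrite addn0; case: ltnP => //= ik; rewrite ltnNge ik andbF.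
- move=> ok k_in; apply: (IH i.+1 (i :: stk)) => //; rewrite inE.
  by case: (eqVneq k i) => [|ne] /=; [rewrite orbT | move: k_in; lia].
case: stk => [|j stk] //= ok k_in.
rewrite /matched_in /= -/(matched_in _ k).
case: (eqVneq k i) => [->|ne]; first by rewrite !orbT.
case: (eqVneq k j) => [->|nej] //=; apply: IH => //.
by move: k_in; rewrite inE (negbTE nej) /=; lia.
Qed.

Definition mate_in (M : seq (nat * nat)) (i : nat) : seq nat :=
  [seq p.2 | p <- M & p.1 == i] ++ [seq p.1 | p <- M & p.2 == i].

Lemma matched_mate M k : matched_in M k = (mate_in M k != [::]).
Proof.
rewrite /matched_in /mate_in -size_eq0 size_cat !size_map !size_filter.
by elim: M => [|p M IH] //=; case: (p.1 == k) => //=; case: (p.2 == k) => //=; lia.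
Qed.

Lemma matched_cat M1 M2 k :
  matched_in (M1 ++ M2) k = matched_in M1 k || matched_in M2 k.
Proof. exact: has_cat. Qed.

Lemma unmatched_filter M i : ~~ matched_in M i ->
  [seq p <- M | p.1 == i] = [::] /\ [seq p <- M | p.2 == i] = [::].
Proof.
rewrite matched_mate negbK /mate_in => /eqP/(congr1 size).
by rewrite size_cat !size_map => /eqP; rewrite addn_eq0 !size_eq0 => /andP[/eqP-> /eqP->].
Qed.

Lemma mate_in_catl M1 M2 i :
  ~~ matched_in M2 i -> mate_in (M1 ++ M2) i = mate_in M1 i.
Proof. by case/unmatched_filter=> M2i1 M2i2; rewrite /mate_in !filter_cat M2i1 M2i2 !cats0. Qed.

Lemma mate_in_catr M1 M2 i :
  ~~ matched_in M1 i -> mate_in (M1 ++ M2) i = mate_in M2 i.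
Proof. by case/unmatched_filter=> M1i1 M1i2; rewrite /mate_in !filter_cat M1i1 M1i2. Qed.

Lemma mate_in_shift M j x :
  mate_in (shift_pairs j M) (x + j) = [seq y + j | y <- mate_in M x].
Proof.
rewrite /mate_in map_cat; congr (_ ++ _).
  by elim: M => [|p M IH] //=; rewrite eqn_add2r; case: (p.1 == x); rewrite /= IH.
by elim: M => [|p M IH] //=; rewrite eqn_add2r; case: (p.2 == x); rewrite /= IH.
Qed.

Lemma matched_shift M j k : matched_in (shift_pairs j M) (k + j) = matched_in M k.
Proof. by rewrite !matched_mate mate_in_shift; case: (mate_in M k). Qed.

Lemma unmatched_shift M j i : i < j -> ~~ matched_in (shift_pairs j M) i.
Proof. by move=> ij; apply/hasPn => _ /mapP[p _ ->] /=; rewrite !gtn_eqF ?ltn_addl. Qed.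

Lemma matching_bound u p : p \in matching u -> (p.1 < size u) && (p.2 < size u).
Proof. exact: mtch_bound. Qed.

Lemma unmatched_ge u i : size u <= i -> ~~ matched_in (matching u) i.
Proof.
move=> ui; apply/hasPn => p /matching_bound /andP[p1 p2].
by rewrite !ltn_eqF // (leq_trans _ ui).
Qed.

Lemma mate_in_matching_lt u i m : m \in mate_in (matching u) i -> m < size u.
Proof.
rewrite mem_cat => /orP[] /mapP[p];
  by rewrite mem_filter => /andP[_ /matching_bound /andP[]] ? ? ->.
Qed.

Definition dyck (u : seq bool) := no_underflow u 0 && (count negb u == count id u).

Lemma dyck_count u : dyck u -> count negb u = count id u.
Proof. by case/andP=> _ /eqP. Qed.

Lemma dyck_prefix u m : dyck u -> count negb (take m u) <= count id (take m u).
Proof. by case/andP=> /no_underflowP/(_ m); rewrite addn0. Qed.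

Lemma dyck_suffix u m : dyck u -> count id (drop m u) <= count negb (drop m u).
Proof.
move=> du; have := dyck_prefix m du; have := dyck_count du.
by rewrite -[in X in X -> _](cat_take_drop m u) !count_cat; lia.
Qed.

Lemma dyck_stack u i : dyck u -> mtch_stack u i [::] = [::].
Proof.
case/andP=> ok /eqP cnt; have := @size_mtch_stack u i [::] ok.
by rewrite cnt /= => /addIn /size0nil.
Qed.

Lemma matched_dyck u k : dyck u -> matched_in (matching u) k = (k < size u).
Proof.
move=> du; case: ltnP => [ku|/unmatched_ge/negbTE//].
have /andP[ok _] := du.
by have := @mtch_matched u 0 [::] k ok; rewrite dyck_stack // in_nil !orbF add0n ku; apply.
Qed.

Lemma mate_idx_matched w i :
  matched_in (matching w) i -> mate_idx w i = head i (mate_in (matching w) i).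
Proof. by rewrite matched_mate /mate_idx -/(mate_in _ _); case: (mate_in _ _). Qed.

Lemma mate_idx_unmatched w i j : ~~ matched_in (matching w) i -> j < size w ->
  {in iota 0 (size w), forall k, (k != i) && ~~ matched_in (matching w) k = (k == j)} ->
  mate_idx w i = j.
Proof.
rewrite matched_mate negbK => /eqP Mi jw free.
rewrite /mate_idx -/(mate_in _ _) Mi (eq_in_filter free) filter_pred1_uniq //.
  exact: iota_uniq.
by rewrite mem_iota.
Qed.

Lemma mate_idx_dyck_lt u i : dyck u -> i < size u -> mate_idx u i < size u.
Proof.
move=> du iu; have ui : matched_in (matching u) i by rewrite matched_dyck.
rewrite mate_idx_matched //; move: ui; rewrite matched_mate.
by case Mi: (mate_in _ _) => [|m s] //= _; apply: (@mate_in_matching_lt u i); rewrite Mi mem_head.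
Qed.

Definition ubvb (u v : seq bool) := u ++ false :: v ++ [:: false].

Lemma size_ubvb u v : size (ubvb u v) = size u + size v + 2.
Proof. by rewrite size_cat /= size_cat /=; lia. Qed.

Lemma take_ubvb u v : take (size u).+1 (ubvb u v) = rcons u false.
Proof. by rewrite take_cat ltnNge leqnSn /= subSnn /= take0 cats1. Qed.

Lemma drop_ubvb u v : drop (size u).+1 (ubvb u v) = rcons v false.
Proof. by rewrite drop_cat ltnNge leqnSn /= subSnn /= drop0 cats1. Qed.

Section DyckPair.
Variables u v : seq bool.
Hypotheses (du : dyck u) (dv : dyck v).

Lemma matching_ubvb :
  matching (ubvb u v) = matching u ++ shift_pairs (size u).+1 (matching v).
Proof.
rewrite /matching mtch_cat dyck_stack //= mtch_cat dyck_stack //= cats0.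
by rewrite -(mtch_shift v 0 [::]).
Qed.

Lemma matched_ubvb k : matched_in (matching (ubvb u v)) k =
  (k < size u) || (size u < k < size u + size v + 1).
Proof.
rewrite matching_ubvb matched_cat matched_dyck //.
case: (ltnP (size u) k) => [uk|ku]; last first.
  by rewrite (negbTE (unmatched_shift _ _)) ?orbF ?andFb ?orbF // ltnS.
by rewrite -(subnK uk) matched_shift matched_dyck //; lia.
Qed.

Lemma mate_idx_ubvbl i : i < size u -> mate_idx (ubvb u v) i = mate_idx u i.
Proof.
move=> iu; have ui : matched_in (matching u) i by rewrite matched_dyck.
rewrite !mate_idx_matched ?matched_ubvb ?iu // matching_ubvb mate_in_catl //.
exact/unmatched_shift/ltnW.
Qed.

Lemma mate_idx_ubvbr i : i < size v ->
  mate_idx (ubvb u v) (i + (size u).+1) = mate_idx v i + (size u).+1.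
Proof.
move=> iv; have vi : matched_in (matching v) i by rewrite matched_dyck.
rewrite !mate_idx_matched ?matched_ubvb //; last lia.
rewrite matching_ubvb mate_in_catr; last by apply: unmatched_ge; lia.
by rewrite mate_in_shift; case: (mate_in _ _).
Qed.

Lemma mate_idx_ubvb_free :
  mate_idx (ubvb u v) (size u) = size u + size v + 1 /\
  mate_idx (ubvb u v) (size u + size v + 1) = size u.
Proof.
have free k : k < size u + size v + 2 ->
    ~~ matched_in (matching (ubvb u v)) k = (k == size u) || (k == size u + size v + 1).
  by rewrite matched_ubvb; lia.
split; apply: mate_idx_unmatched; rewrite ?size_ubvb.
- by rewrite free ?eqxx //; lia.
- lia.
- by move=> k; rewrite mem_iota => /andP[_ kw]; rewrite free //; lia.
- by rewrite free ?eqxx ?orbT //; lia.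
- lia.
- by move=> k; rewrite mem_iota => /andP[_ kw]; rewrite free //; lia.
Qed.

End DyckPair.

Lemma ubvb_prefix u v m : dyck u -> dyck v -> m < size (ubvb u v) ->
  count negb (take m (ubvb u v)) <= count id (take m (ubvb u v)) + 1.
Proof.
move=> du dv; rewrite size_ubvb /ubvb take_cat => mw; case: ltnP => [mu|um].
  by have := dyck_prefix m du; lia.
rewrite !count_cat (dyck_count du); case: (m - size u) (subnK um) => [|j] /= ej; first lia.
rewrite take_cat; case: ltnP => [jv|vj].
  by have := dyck_prefix j dv; lia.
by rewrite (_ : j - size v = 0) ?take0 /= ?cats0 ?(dyck_count dv); lia.
Qed.

Lemma rot_ubvb u v u' v' k : dyck u -> dyck v -> dyck u' -> dyck v' ->
  0 < k < size (ubvb u v) -> rot k (ubvb u v) = ubvb u' v' -> k = (size u).+1.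
Proof.
move=> du dv du' dv'; rewrite size_ubvb => /andP[k_gt0 k_lt] rot_k.
apply/eqP/negPn/negP => k_ne.
(* any other cut leaves a proper prefix with two excess b's *)
suff [P [Q [PQ P_lt P_exc]]] : exists P Q, [/\ rot k (ubvb u v) = P ++ Q,
    size P < size u + size v + 2 & count id P + 2 <= count negb P].
  have := @ubvb_prefix u' v' (size P) du' dv'.
  by rewrite -rot_k size_rot size_ubvb PQ take_size_cat // => /(_ P_lt); lia.
have [ku|uk] := leqP k (size u).
  exists (drop k u ++ false :: v ++ [:: false]), (take k u); split.
  - by rewrite -(rot_size_cat (take k u)) size_takel // /ubvb catA cat_take_drop.
  - by rewrite size_cat /= size_cat size_drop /=; lia.
  - by rewrite !count_cat /= !count_cat /= (dyck_count dv); have := dyck_suffix k du; lia.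
pose j := k - (size u).+1.
exists (drop j v ++ false :: u ++ [:: false]), (take j v); split.
- have -> : ubvb u v = (u ++ false :: take j v) ++ (drop j v ++ [:: false]).
    by rewrite -catA /= catA cat_take_drop.
  have <- : size (u ++ false :: take j v) = k by rewrite size_cat /= size_takel /j; lia.
  by rewrite rot_size_cat -!catA /= -catA.
- by rewrite size_cat /= size_cat size_drop /= /j; lia.
- by rewrite !count_cat /= !count_cat /= (dyck_count du); have := dyck_suffix j dv; lia.
Qed.

Section Mate.
Variables (D : eqType) (wh : D -> bool).

Definition mate (L : seq D) (l : D) := nth l L (mate_idx (map wh L) (index l L)).

Lemma map_cat_ubvb (A B : seq D) u v :
  map wh A = rcons u false -> map wh B = rcons v false -> map wh (A ++ B) = ubvb u v.
Proof. by move=> wA wB; rewrite map_cat wA wB cat_rcons -cats1. Qed.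

Section Swap.
Variables (A B : seq D) (u v : seq bool).
Hypotheses (du : dyck u) (dv : dyck v).
Hypotheses (wA : map wh A = rcons u false) (wB : map wh B = rcons v false).
Hypothesis uAB : uniq (A ++ B).

Let sA : size A = (size u).+1. Proof. by rewrite -(size_map wh) wA size_rcons. Qed.
Let sB : size B = (size v).+1. Proof. by rewrite -(size_map wh) wB size_rcons. Qed.

Let notin_A l : l \in B -> l \notin A.
Proof.
move=> lB; apply/negP => lA; move: uAB; rewrite cat_uniq.
by case/and3P=> _ /hasPn/(_ l lB); rewrite lA.
Qed.

Lemma mate_swap l : l \in A -> mate (A ++ B) l = mate (B ++ A) l.
Proof.
move=> lA; have lB : l \notin B by apply: contraTN lA; apply: notin_A.
rewrite /mate (map_cat_ubvb wA wB) (map_cat_ubvb wB wA) !index_cat lA (negbTE lB).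
have : index l A < size A by rewrite index_mem.
rewrite sA ltnS leq_eqVlt => /predU1P[-> | iu].
  have [-> _] := mate_idx_ubvb_free du dv; have [_ free] := mate_idx_ubvb_free dv du.
  rewrite sB (_ : (size v).+1 + size u = size v + size u + 1); last lia.
  by rewrite free !nth_cat sA sB ltnSn ifF; [congr nth|]; lia.
rewrite (mate_idx_ubvbl du dv iu) sB addnC (mate_idx_ubvbr dv du iu).
have mu := mate_idx_dyck_lt du iu.
by rewrite !nth_cat sA sB ltnS ltnW // ifF; [congr nth|]; lia.
Qed.

Lemma mate_last x y : mate (A ++ B) (last x B) = last y A.
Proof.
have lB : last x B \in B by rewrite -(nth_last x) mem_nth // sB.
have uB : uniq B by move: uAB; rewrite cat_uniq => /and3P[].
rewrite /mate (map_cat_ubvb wA wB) index_cat (negbTE (notin_A lB)).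
rewrite -[in index _ B](nth_last x) index_uniq ?sB //=.
have [_ free] := mate_idx_ubvb_free du dv.
rewrite sA (_ : (size u).+1 + size v = size u + size v + 1) ?free; last lia.
by rewrite nth_cat sA ltnSn (set_nth_default y) ?sA // -(nth_last y) sA.
Qed.

End Swap.

Variables (L : seq D) (u v : seq bool).
Hypotheses (du : dyck u) (dv : dyck v) (uL : uniq L) (wL : map wh L = ubvb u v).

Let A := take (size u).+1 L.
Let B := drop (size u).+1 L.
Let wA : map wh A = rcons u false. Proof. by rewrite map_take wL take_ubvb. Qed.
Let wB : map wh B = rcons v false. Proof. by rewrite map_drop wL drop_ubvb. Qed.
Let uAB : uniq (A ++ B). Proof. by rewrite cat_take_drop. Qed.

Lemma mate_rot : {in L, mate (rot (size u).+1 L) =1 mate L}.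
Proof.
move=> l; rewrite /rot -/A -/B -[in l \in L](cat_take_drop (size u).+1 L) -/A -/B mem_cat.
rewrite -[in RHS](cat_take_drop (size u).+1 L) -/A -/B.
case/orP=> [lA|lB]; first by rewrite (mate_swap du dv wA wB uAB lA).
by rewrite (mate_swap dv du wB wA _ lB) // uniq_catC.
Qed.

Lemma mate_rot_last x : mate L (last x L) = last x (rot (size u).+1 L).
Proof.
rewrite /rot -/A -/B -[in LHS](cat_take_drop (size u).+1 L) -/A -/B.
by rewrite !last_cat; exact: (mate_last du dv wA wB uAB).
Qed.

End Mate.

Lemma filter_rot (T : Type) (a : pred T) s k :
  filter a (rot k s) = rot (count a (take k s)) (filter a s).
Proof.
have -> : filter a s = filter a (take k s) ++ filter a (drop k s).
  by rewrite -filter_cat cat_take_drop.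
by rewrite -size_filter rot_size_cat /rot filter_cat.
Qed.

Section Border.
Variables (D : finType) (T : etree D).

Lemma tphi_inj : injective (tphi T).
Proof. by move=> x y /perm_inj /perm_inj. Qed.

Definition border (r : D) := orbit (tphi T) (tphi T r).

Lemma border_rcons r : exists s, border r = rcons s r.
Proof.
exists (traject (tphi T) (tphi T r) (fingraph.order (tphi T) (tphi T r)).-1).
by rewrite /border /orbit -orderSpred trajectSr -/(fingraph.finv _ _) (finv_f tphi_inj).
Qed.

Hypothesis PT : is_plane_tree T.

Lemma mem_border r d : d \in border r.
Proof. by case: PT => _ _ one_face _; rewrite -fconnect_orbit. Qed.

Lemma border_rot r r' : exists k, border r' = rot k (border r).
Proof.
exists (index (tphi T r') (border r)).
apply: (orbitE (cycle_orbit (@tphi_inj) _) (orbit_uniq _ _)); exact: mem_border.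
Qed.

Lemma count_border r (P : pred D) : count P (border r) = #|P|.
Proof.
rewrite -sum1_count -sum1_card (perm_big (index_enum D)) /=; last first.
  apply: uniq_perm; [exact: orbit_uniq | exact: index_enum_uniq |].
  by move=> x; rewrite mem_border mem_index_enum.
by apply: eq_bigl => x.
Qed.

Lemma leafseq_border : leafseq T = filter (leafd T) (border (troot T)).
Proof.
rewrite /leafseq /border /orbit; congr (filter _ (traject _ _ _)).
by apply/esym/eq_card => d; case: PT => _ _ one_face _; rewrite !inE one_face.
Qed.

End Border.

Section LeafSeq.
Variables (D : finType) (T : etree D).
Hypothesis PT : is_plane_tree T.

Lemma uniq_leafseq : uniq (leafseq T).
Proof. by rewrite leafseq_border // filter_uniq // orbit_uniq. Qed.

Lemma mem_leafseq l : (l \in leafseq T) = leafd T l.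
Proof. by rewrite leafseq_border // mem_filter mem_border // andbT. Qed.

Lemma count_leafseq (P : pred D) : count P (leafseq T) = #|[pred d | P d && leafd T d]|.
Proof. by rewrite leafseq_border // count_filter count_border. Qed.

Lemma leafseq_rcons : leafd T (troot T) -> exists s, leafseq T = rcons s (troot T).
Proof.
move=> root_leaf; rewrite leafseq_border //; have [s ->] := border_rcons T (troot T).
by exists (filter (leafd T) s); rewrite filter_rcons root_leaf.
Qed.

Lemma leafseq_reroot r : exists k, leafseq (reroot T r) = rot k (leafseq T).
Proof.
have [k rk] := border_rot PT (troot T) r.
exists (count (leafd T) (take k (border T (troot T)))).
have -> : leafseq (reroot T r) = filter (leafd T) (border T r).
  exact: (leafseq_border (T := reroot T r)).
by rewrite leafseq_border // rk filter_rot.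
Qed.

End LeafSeq.

Section LeafCount.
Variables (D : finType) (T : etree D).
Hypothesis PT : is_plane_tree T.
Hypothesis inner_deg : forall d, ~~ leafd T d -> ~~ odd (vdeg T d) /\
  #|[pred e | fconnect (tsg T) d e && leafd T (tal T e) && twhite T (tal T e)]|
    = (vdeg T d)./2 - 1.

Local Notation s := (tsg T).
Local Notation a := (tal T).

Lemma order_tal d : fingraph.order a d = 2.
Proof.
case: PT => tal_invol tal_nofix _ _.
apply: (@order_cycle _ _ [:: d; a d]); rewrite ?inE ?eqxx //=.
  by rewrite tal_invol !eqxx.
by rewrite andbT inE eq_sym tal_nofix.
Qed.

Lemma card_darts : #|D| = (fcard a predT).*2.
Proof.
rewrite -muln2 (@fcard_order_set _ _ (@perm_inj _ a)) //.
  by apply/subsetP => d _; rewrite inE order_tal.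
Qed.

Lemma fconnect_leaf x y : leafd T x -> fconnect s x y -> y = x.
Proof. by move=> /eqP sx /iter_findex <-; apply: iter_fix. Qed.

Lemma fconnect_inner x y : ~~ leafd T x -> fconnect s x y -> ~~ leafd T y.
Proof.
move=> x_in xy; apply: contra x_in => y_leaf.
by rewrite (fconnect_leaf y_leaf (y := x)) // (fconnect_sym (@perm_inj _ s)).
Qed.

Definition inner_root (r : D) := froots s r && ~~ leafd T r.

Lemma sum_inner_darts (F : D -> nat) :
  \sum_(d | ~~ leafd T d) F d = \sum_(r | inner_root r) \sum_(d | fconnect s r d) F d.
Proof.
have s_sym : connect_sym (frel s) := fconnect_sym (@perm_inj _ s).
rewrite (partition_big (froot s) inner_root) => [|d d_in]; last first.
  by rewrite /inner_root roots_root // (fconnect_inner d_in) ?connect_root.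
apply: eq_bigr => r /andP[/eqP root_r r_in]; apply: eq_bigl => d.
rewrite -{1}root_r (root_connect s_sym) s_sym.
by apply/andb_idl/fconnect_inner.
Qed.

Lemma card_inner_darts : #|[pred d | ~~ leafd T d]| = \sum_(r | inner_root r) vdeg T r.
Proof.
rewrite -sum1_card sum_inner_darts; apply: eq_bigr => r _.
by rewrite /vdeg /fingraph.order -sum1_card.
Qed.

Let white_leaf (d : D) := leafd T d && twhite T d.

Let card_cond (P : pred D) :
  #|[pred d | P d && white_leaf (a d)]| = \sum_(d | P d) white_leaf (a d).
Proof.
rewrite -sum1_card big_mkcondr /=; apply: eq_bigr => d _.
by case: (white_leaf (a d)).
Qed.

Lemma card_white_facing :
  #|[pred d | ~~ leafd T d && leafd T (a d) && twhite T (a d)]| =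
  \sum_(r | inner_root r) ((vdeg T r)./2 - 1).
Proof.
rewrite (eq_card (B := [pred d | ~~ leafd T d && white_leaf (a d)])); last first.
  by move=> d; rewrite !inE -andbA.
rewrite card_cond sum_inner_darts; apply: eq_bigr => r /andP[_ r_in].
rewrite -(proj2 (inner_deg r_in)) -card_cond; apply: eq_card => d.
by rewrite !inE -andbA.
Qed.

Lemma fcard_vertices : fcard s predT = #|inner_root| + #|[pred d | leafd T d]|.
Proof.
rewrite /n_comp_mem -(cardID (leafd T)) addnC; congr (_ + _); apply: eq_card => d.
  by rewrite !inE andbT andbC.
rewrite !inE andbT andb_idl // => d_leaf.
by rewrite /roots /= (fconnect_leaf d_leaf (connect_root _ d)).
Qed.

Lemma leaf_count : #|[pred d | leafd T d]| =
  2 * #|[pred d | ~~ leafd T d && leafd T (a d) && twhite T (a d)]| + 2.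
Proof.
(* With I inner darts, q inner vertices and W inner darts facing white leaves,
   I = 2W + 2q by the degree condition, 2E = I + #leaves, and Euler's
   q + #leaves + 1 = E + 2 leaves #leaves = 2W + 2. *)
have deg_inner r : inner_root r -> vdeg T r = 2 * ((vdeg T r)./2 - 1) + 2.
  case/andP=> _ /inner_deg[deg_even _]; have := fingraph.order_gt0 s r.
  by have := odd_double_half (vdeg T r); rewrite (negbTE deg_even) -mul2n /vdeg; lia.
have inner_darts : #|[pred d | ~~ leafd T d]| =
    2 * \sum_(r | inner_root r) ((vdeg T r)./2 - 1) + #|inner_root| * 2.
  by rewrite card_inner_darts (eq_bigr _ deg_inner) big_split /= -big_distrr sum_nat_const.
have darts : #|D| = #|[pred d | ~~ leafd T d]| + #|[pred d | leafd T d]|.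
  by rewrite addnC -(cardC (leafd T)).
case: PT => _ _ _; rewrite fcard_vertices card_white_facing.
by move: darts; rewrite card_darts -muln2 mulnK // inner_darts; lia.
Qed.

End LeafCount.

Section Word.
Variables (D : finType) (T : etree D).
Hypotheses (ET : is_eulerian_tree T) (BT : balanced T).

Lemma white_leaf_tal_inner l : leafd T l -> twhite T l -> ~~ leafd T (tal T l).
Proof.
have [PT _ _ inner_deg] := ET; have [p1 [p2 [_ _ wT]]] := BT.
have [tal_invol _ one_face _] := PT.
move=> l_leaf l_white; apply/negP => al_leaf.
(* T would be a single edge, whose word w b is not balanced *)
have all_leaves d : leafd T d.
  have cyc : fcycle (tphi T) [:: l; tal T l].
    by rewrite /= /tphi (eqP al_leaf) tal_invol (eqP l_leaf) !eqxx.
  have := fconnect_cycle cyc (mem_head _ _) d; rewrite one_face !inE.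
  by case/esym/orP => /eqP ->.
have : size (word T) = 2.
  rewrite size_map -count_predT count_leafseq // (leaf_count PT inner_deg).
  by rewrite (@eq_card0 _ [pred d | _ && _]) // => d; rewrite inE all_leaves.
rewrite wT size_ubvb => size2.
have [p1_nil p2_nil] : p1 = [::] /\ p2 = [::] by split; apply/nilP; rewrite /nilp; lia.
have : twhite T l \in word T by rewrite map_f ?mem_leafseq.
by rewrite wT p1_nil p2_nil l_white.
Qed.

Lemma word_count : count negb (word T) = count id (word T) + 2.
Proof.
have [PT _ _ inner_deg] := ET; have [tal_invol _ _ _] := PT.
have white : count id (word T) =
    #|[pred d | ~~ leafd T d && leafd T (tal T d) && twhite T (tal T d)]|.
  rewrite count_map count_leafseq // -!sum1_card (reindex_inj (@perm_inj _ (tal T))) /=.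
  apply: eq_bigl => d; rewrite !inE /=.
  case ad_leaf: (leafd T (tal T d)); case ad_white: (twhite T (tal T d)); rewrite ?andbF //=.
  by rewrite andbT -[d in leafd T d]tal_invol white_leaf_tal_inner.
have := count_predC id (word T); rewrite white /= size_map -count_predT count_leafseq //.
rewrite (@eq_card _ [pred d | predT d && leafd T d] [pred d | leafd T d]) //.
rewrite (leaf_count PT inner_deg).
by rewrite (@eq_count _ _ negb) //; lia.
Qed.

Lemma balanced_dyck : exists p1 p2, [/\ dyck p1, dyck p2 & word T = ubvb p1 p2].
Proof.
have [p1 [p2 [c1 c2 wT]]] := BT; exists p1, p2.
have := word_count; rewrite wT /ubvb !count_cat /= !count_cat /= => cnt.
have := c1 (size p1); have := c2 (size p2); rewrite !take_size => e2 e1.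
have ok p : correct p -> no_underflow p 0.
  by move=> cp; apply/no_underflowP => k; rewrite addn0.
by split=> //; apply/andP; split; rewrite ?ok //; apply/eqP; lia.
Qed.

End Word.

Lemma rot_rcons_pos (T : eqType) (s s' : seq T) x y k :
  rot k (rcons s x) = rcons s' y -> x != y -> 0 < k < (size s).+1.
Proof.
move=> rot_k xy; apply/andP; split.
  rewrite lt0n; apply: contraNneq xy => k0.
  by move: rot_k; rewrite k0 rot0 => /rcons_inj[_ ->].
rewrite ltnNge; apply: contraNN xy => sk.
by move: rot_k; rewrite rot_oversize ?size_rcons // => /rcons_inj[_ ->].
Qed.

Section Closure.
Variables (D : finType) (T : etree D).

Lemma pa_sclosure d : pa (sclosure T) d =
  if leafd T (tal T d) then tal T (mate (twhite T) (leafseq T) (tal T d)) else tal T d.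
Proof. by []. Qed.

Lemma pa_sclosure_reroot r d : pa (sclosure (reroot T r)) d =
  if leafd T (tal T d) then tal T (mate (twhite T) (leafseq (reroot T r)) (tal T d))
  else tal T d.
Proof. by []. Qed.

End Closure.

Section Reroot.
Variables (D : finType) (T : etree D) (r' : D).
Hypotheses (ET : is_eulerian_tree T) (BT : balanced T) (r'_ne : r' != troot T).
Hypotheses (ET' : is_eulerian_tree (reroot T r')) (BT' : balanced (reroot T r')).

Lemma leafseq_reroot_free : exists p1 p2, [/\ dyck p1, dyck p2, word T = ubvb p1 p2
  & leafseq (reroot T r') = rot (size p1).+1 (leafseq T)].
Proof.
have [[PT root_leaf _ _] [_ r'_leaf _ _]] := (ET, ET').
have [p1 [p2 [d1 d2 wT]]] := balanced_dyck ET BT.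
have [q1 [q2 [e1 e2 wT']]] := balanced_dyck ET' BT'.
have [k rot_k] := leafseq_reroot PT r'.
exists p1, p2; split=> //; rewrite rot_k; congr rot.
apply: (rot_ubvb d1 d2 e1 e2); last by rewrite -wT -wT' /word rot_k map_rot.
have [s Ls] := leafseq_rcons PT root_leaf.
have [s' Ls'] := leafseq_rcons (T := reroot T r') PT r'_leaf.
rewrite -wT size_map Ls size_rcons; apply: (@rot_rcons_pos _ s s' _ r').
  by rewrite -Ls' rot_k Ls.
by rewrite eq_sym.
Qed.

Lemma pa_sclosure_reroot_free : pa (sclosure (reroot T r')) =1 pa (sclosure T).
Proof.
have [PT _ _ _] := ET; have [p1 [p2 [d1 d2 wT rot_L]]] := leafseq_reroot_free.
move=> d; rewrite pa_sclosure_reroot pa_sclosure; case: ifP => // ad_leaf.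
by rewrite rot_L (mate_rot d1 d2 (uniq_leafseq PT) wT) // mem_leafseq.
Qed.

Lemma proot_sclosure_reroot_free :
  proot (sclosure (reroot T r')) = pa (sclosure T) (proot (sclosure T)).
Proof.
have [[PT root_leaf _ _] [_ r'_leaf _ _]] := (ET, ET'); have [tal_invol _ _ _] := PT.
have [p1 [p2 [d1 d2 wT rot_L]]] := leafseq_reroot_free.
rewrite pa_sclosure /= tal_invol root_leaf; congr (tal T _).
have [s Ls] := leafseq_rcons PT root_leaf.
have [s' Ls'] := leafseq_rcons (T := reroot T r') PT r'_leaf.
have last_L : last r' (leafseq T) = troot T by rewrite Ls last_rcons.
have last_L' : last r' (leafseq (reroot T r')) = r' by rewrite Ls' last_rcons.
by rewrite -last_L (mate_rot_last d1 d2 (uniq_leafseq PT) wT) -rot_L last_L'.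
Qed.

End Reroot.

Unset Implicit Arguments.

Theorem mainTheorem4 (D : finType) (T : etree D) (r' : D) :
  is_eulerian_tree T -> balanced T ->
  r' != troot T -> is_eulerian_tree (reroot T r') -> balanced (reroot T r') ->
  rmap_iso (sclosure (reroot T r')) (reverse_root (sclosure T)).
Proof.
move=> ET BT r'_ne ET' BT'; exists id; split=> //.
- by rewrite imset_id.
- by move=> d _; apply: pa_sclosure_reroot_free.
- exact: proot_sclosure_reroot_free.
Qed.
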